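(* Let $r\ge1$, $n$ be integers and let $\sigma,\sigma':\mathbb{Z}_n\to\{0,1\}$ satisfy $\mathrm{maj}_r(\sigma)=\sigma'$. For every block $[i,j]\in B(\sigma')$, the number of blocks in the block interval $[f^{\leftarrow}_{\sigma,\sigma'}([i,j]),f^{\rightarrow}_{\sigma,\sigma'}([i,j])]_{B(\sigma)}$ is odd.
   Context: Cells are elements of $\mathbb{Z}_n$, arithmetic mod $n$; $[a,b]$ denotes the cyclic interval $a,\dots,b$. The majority rule with radius $r$: $\mathrm{maj}_r(\sigma)(i)=0$ if among the cells of $[i-r,i+r]$ strictly more have value $0$ than $1$ under $\sigma$, and $=1$ otherwise. For $\beta\in\{0,1\}$, $B^\beta(\sigma)$ is the set of cell intervals $[i,j]$ with $\sigma(k)=\beta$ for all $k\in[i,j]$ and $\sigma(i-1)=\sigma(j+1)=1-\beta$ (maximal homogeneous blocks); $B(\sigma)=B^0(\sigma)\cup B^1(\sigma)$. For $[i,j]\in B(\sigma')$: the left mapping $f^{\leftarrow}_{\sigma,\sigma'}([i,j])$ is the block of $B(\sigma)$ containing cell $j-r$, and the right mapping $f^{\rightarrow}_{\sigma,\sigma'}([i,j])$ is the block of $B(\sigma)$ containing cell $i+r$. For blocks $X=[x,y]$, $X'=[x',y']$ and a set of blocks $B$, the block interval $[X,X']_B$ is the set of blocks $[i,j]\in B$ with $[i,j]\subseteq[x,y']$. *)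

(* Cells of Z_n are represented by the naturals c < n,
   with arithmetic modulo n.  Configurations are functions nat -> bool
   (false = value 0, true = value 1); only their values on cells c < n matter,
   since every cell index used below is reduced modulo n. *)
From mathcomp Require Import all_boot.
Set Implicit Arguments. Unset Strict Implicit. Unset Printing Implicit Defensive.

Definition cadd (n a k : nat) : nat := (a + k) %% n.
Definition csub (n a k : nat) : nat := (a + (n - k %% n)) %% n.

(* c lies in the cyclic interval [a,b] = {a, a+1, ..., b} of Z_n (a, b < n). *)
Definition in_cint (n a b c : nat) : bool :=
  (c < n) && ((c + (n - a)) %% n <= (b + (n - a)) %% n).

Definition maj (n r : nat) (sigma : nat -> bool) (i : nat) : bool :=
  let W := [seq c <- iota 0 n | in_cint n (csub n i r) (cadd n i r) c] in
  let zeros := count (fun c => ~~ sigma c) W in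
  let ones := count (fun c => sigma c) W in
  if ones < zeros then false else true.

Definition is_block_of (n : nat) (beta : bool) (sigma : nat -> bool) (i j : nat) : bool :=
  [&& i < n, j < n,
      all (fun c => in_cint n i j c ==> (sigma c == beta)) (iota 0 n),
      sigma (csub n i 1) == ~~ beta &
      sigma (cadd n j 1) == ~~ beta].

Definition is_block (n : nat) (sigma : nat -> bool) (i j : nat) : bool :=
  is_block_of n false sigma i j || is_block_of n true sigma i j.

Definition cint_sub (n a b x y : nat) : bool :=
  all (fun c => in_cint n a b c ==> in_cint n x y c) (iota 0 n).

Definition is_left_image (n r : nat) (sigma : nat -> bool) (i j x y : nat) : bool :=
  is_block n sigma x y && in_cint n x y (csub n j r).

Definition is_right_image (n r : nat) (sigma : nat -> bool) (i j x y : nat) : bool :=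
  is_block n sigma x y && in_cint n x y (cadd n i r).

(* number of blocks in the block interval [[x,y],[x',y']]_{B(sigma)}:
   blocks [a,b] \in B(sigma) with [a,b] \subseteq [x,y'] *)
Definition block_interval_card (n : nat) (sigma : nat -> bool) (x y' : nat) : nat :=
  \sum_(a < n) \sum_(b < n) (is_block n sigma a b && cint_sub n a b x y').

(* At both ends of a block [i, j] of maj_r(sigma), of value beta, the majority
   changes.  Moving the window from q to q + 1 only exchanges the cells q - r and
   q + r + 1, so these changes force sigma(j - r) = sigma(i + r) = beta.  Hence
   the cyclic interval [x, y'] running from the start of the block of j - r to
   the end of the block of i + r has end cells of value beta whose outer
   neighbours have value 1 - beta.  After rotating Z_n so that x becomes 0, the
   blocks inside [x, y'] correspond to their last cells, i.e. to the changes of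
   value between consecutive cells of x, ..., y' + 1, and there is an odd number
   of those because sigma(x) <> sigma(y' + 1). *)

From mathcomp Require Import all_boot zify.
Set Implicit Arguments. Unset Strict Implicit. Unset Printing Implicit Defensive.

Lemma modn_split2 m n : 0 < n -> m < 2 * n ->
  (m < n /\ m %% n = m) \/ (n <= m /\ m %% n = m - n).
Proof.
move=> n_gt0 lt_m2n.
case: (ltnP m n) => [lt_mn|le_nm]; first by left; rewrite modn_small.
right; split => //; rewrite -[in LHS](subnK le_nm) modnDr modn_small //; lia.
Qed.

Lemma modn_split3 m n : 0 < n -> m < 3 * n ->
  (m < n /\ m %% n = m) \/ (n <= m < 2 * n /\ m %% n = m - n) \/
  (2 * n <= m /\ m %% n = m - 2 * n).
Proof.
move=> n_gt0 lt_m3n; case: (ltnP m (2 * n)) => [lt_m2n|le_2nm].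
  by case: (modn_split2 n_gt0 lt_m2n) => [|[le_nm ->]]; [left | right; left; split; lia].
right; right; split => //.
rewrite -[in LHS](subnK le_2nm) addnC modnMDl modn_small //; lia.
Qed.

(* Rewrites every innermost [m %% n] to [m], [m - n] or [m - 2 * n], in all
   cases that lia cannot refute; lia must be able to prove [m < 3 * n]. *)
Ltac case_modn n :=
  repeat match goal with
  | |- context [?m %% n] =>
      lazymatch m with context [_ %% _] => fail | _ => idtac end;
      first [ case: (@modn_split2 m n ltac:(lia) ltac:(lia)) => [[? ->]|[? ->]]
            | case: (@modn_split3 m n ltac:(lia) ltac:(lia))
                => [[? ->]|[[? ->]|[? ->]]] ];
      try (exfalso; lia)
  end.

Section CyclicArithmetic.

Variable n : nat.
Hypothesis n_gt0 : 0 < n.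

Lemma cadd_lt a k : cadd n a k < n.
Proof. exact: ltn_pmod. Qed.

Lemma csub_lt a k : csub n a k < n.
Proof. exact: ltn_pmod. Qed.

Lemma cadd0 a : a < n -> cadd n a 0 = a.
Proof. by move=> lt_an; rewrite /cadd addn0 modn_small. Qed.

Lemma caddA a k l : cadd n (cadd n a k) l = cadd n a (k + l).
Proof. by rewrite /cadd modnDml addnA. Qed.

Lemma caddAC a k l : cadd n (cadd n a k) l = cadd n (cadd n a l) k.
Proof. by rewrite !caddA addnC. Qed.

Lemma csub_cadd1 a k : csub n (cadd n a 1) k = cadd n (csub n a k) 1.
Proof. by rewrite /csub /cadd !modnDml addnAC. Qed.

Lemma cadd_csub x c : x < n -> c < n -> cadd n x (csub n c x) = c.
Proof.
move=> lt_xn lt_cn; rewrite /cadd /csub modnDmr (modn_small lt_xn).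
by rewrite addnCA subnKC ?(ltnW lt_xn) // modnDr modn_small.
Qed.

Lemma csubK c k : c < n -> cadd n (csub n c k) k = c.
Proof.
move=> lt_cn; rewrite /cadd /csub modnDml {2}(divn_eq k n).
have -> : c + (n - k %% n) + (k %/ n * n + k %% n) = k %/ n * n + (c + n).
  by have := ltn_pmod k n_gt0; lia.
by rewrite modnMDl modnDr modn_small.
Qed.

Lemma caddK x t : x < n -> t < n -> csub n (cadd n x t) x = t.
Proof.
move=> lt_xn lt_tn; rewrite /cadd /csub modnDml (modn_small lt_xn).
by rewrite -addnA addnCA subnKC ?(ltnW lt_xn) // modnDr modn_small.
Qed.

Lemma all_iota_cadd x (P : pred nat) : x < n ->
  all P (iota 0 n) = all (fun u => P (cadd n x u)) (iota 0 n).
Proof.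
move=> lt_xn; apply/allP/allP => [allP u | allP c]; rewrite !mem_iota /= => lt_n.
  by apply: allP; rewrite mem_iota cadd_lt.
by rewrite -(cadd_csub lt_xn lt_n); apply: allP; rewrite mem_iota csub_lt.
Qed.

Lemma offset_caddl x a c : x < n -> a < n -> c < n ->
  (cadd n x c + (n - cadd n x a)) %% n = (c + (n - a)) %% n.
Proof. by move=> *; rewrite /cadd; case_modn n; lia. Qed.

Lemma in_cint_caddl x a b u : x < n -> a < n -> b < n -> u < n ->
  in_cint n (cadd n x a) (cadd n x b) (cadd n x u) = in_cint n a b u.
Proof. by move=> ? ? ? lt_un; rewrite /in_cint !offset_caddl // cadd_lt lt_un. Qed.

Lemma in_cint_le a b u : a <= b -> b < n -> u < n ->
  in_cint n a b u = (a <= u <= b).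
Proof. by move=> le_ab lt_bn lt_un; rewrite /in_cint lt_un /=; case_modn n; lia. Qed.

Lemma in_cint_wrap a b : b < a < n -> in_cint n a b n.-1.
Proof. by move=> *; rewrite /in_cint; case_modn n; lia. Qed.

Lemma in_cint_first a b : a < n -> in_cint n a b a.
Proof. by move=> lt_an; rewrite /in_cint lt_an subnKC ?modnn // ltnW. Qed.

Lemma in_cint_last a b : b < n -> in_cint n a b b.
Proof. by move=> lt_bn; rewrite /in_cint lt_bn leqnn. Qed.

Lemma in_cint_shift1 a b c : a < n -> b < n -> c < n ->
  in_cint n (cadd n a 1) (cadd n b 1) c + (c == a)
  = in_cint n a b c + (c == cadd n b 1).
Proof. by move=> *; rewrite /in_cint /cadd; case_modn n; lia. Qed.

End CyclicArithmetic.

Lemma count_add_pointwise (T : eqType) (s : seq T) (a b c d : pred T) :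
  (forall x, x \in s -> a x + b x = c x + d x) ->
  count a s + count b s = count c s + count d s.
Proof.
elim: s => [|y s IH] //= eq_abcd.
have := eq_abcd y (mem_head _ _).
have := IH (fun x sx => eq_abcd x (mem_behead (s := y :: s) sx)); lia.
Qed.

Lemma count_iota_eq_and n a (f : pred nat) : a < n ->
  count (fun c => (c == a) && f c) (iota 0 n) = f a.
Proof.
move=> lt_an; rewrite (eq_count (a2 := predI f (pred1 a))); last first.
  by move=> c /=; rewrite andbC.
by rewrite -count_filter filter_pred1_uniq ?iota_uniq ?mem_iota //= addn0.
Qed.

Section Majority.

Variables (n r : nat) (sigma : nat -> bool).
Hypothesis n_gt0 : 0 < n.

Definition window p := [seq c <- iota 0 n | in_cint n (csub n p r) (cadd n p r) c].

Lemma majE p :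
  maj n r sigma p = (count (predC sigma) (window p) <= count sigma (window p)).
Proof. by rewrite /maj; case: ltnP. Qed.

Lemma count_window_succ (f : pred nat) q : q < n ->
  count f (window (cadd n q 1)) + f (csub n q r)
  = count f (window q) + f (cadd n (cadd n q r) 1).
Proof.
move=> lt_qn; rewrite /window !count_filter csub_cadd1 caddAC.
have lt_an := csub_lt n_gt0 q r; have lt_bn := cadd_lt n_gt0 q r.
rewrite -(count_iota_eq_and f lt_an) -(count_iota_eq_and f (cadd_lt n_gt0 _ 1)).
apply: count_add_pointwise => c; rewrite mem_iota add0n => /andP[_ lt_cn] /=.
have := in_cint_shift1 n_gt0 lt_an lt_bn lt_cn.
by case: (f c); rewrite ?andbT ?andbF ?addn0.
Qed.

Lemma maj_flip q : q < n -> maj n r sigma q != maj n r sigma (cadd n q 1) ->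
  sigma (csub n q r) = maj n r sigma q
  /\ sigma (cadd n (cadd n q r) 1) = maj n r sigma (cadd n q 1).
Proof.
move=> lt_qn; rewrite !majE.
have := count_window_succ sigma lt_qn; have := count_window_succ (predC sigma) lt_qn.
by rewrite /=; case: (sigma (csub n q r)); case: (sigma (cadd n (cadd n q r) 1));
  case: leqP; case: leqP; lia.
Qed.

End Majority.

Lemma block_lt n (s : nat -> bool) a b : is_block n s a b -> a < n /\ b < n.
Proof. by case/orP => /and5P[]. Qed.

Lemma block_boundary n (s : nat -> bool) a b c :
  is_block n s a b -> in_cint n a b c ->
  [/\ s a = s c, s b = s c, s (csub n a 1) = ~~ s c & s (cadd n b 1) = ~~ s c].
Proof.
move=> blk in_c.
suff [beta /and5P[lt_an lt_bn /allP const /eqP s_pred /eqP s_succ]] :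
    exists beta, is_block_of n beta s a b.
  have s_beta d : in_cint n a b d -> s d = beta.
    by move=> in_d; apply/eqP/(implyP (const d _)); rewrite // mem_iota; case/andP: in_d.
  have [-> ->] : s a = beta /\ s b = beta.
    by split; apply: s_beta; [apply: in_cint_first | apply: in_cint_last].
  by rewrite (s_beta c).
by case/orP: blk; eexists; eassumption.
Qed.

Definition prev_cell n k := if k is k'.+1 then k' else n.-1.

Definition const_on (tau : nat -> bool) k t :=
  all (fun u => tau u == tau k) (index_iota k t.+1).

Definition run n (tau : nat -> bool) k t :=
  [&& const_on tau k t, tau (prev_cell n k) != tau k & tau t.+1 != tau k].

Section Runs.

Variables (n : nat) (tau : nat -> bool).

Lemma const_on_refl k : const_on tau k k.
Proof. by rewrite /const_on /index_iota subSn // subnn /= eqxx. Qed.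

Lemma const_onS k t : k <= t ->
  const_on tau k t.+1 = const_on tau k t && (tau t.+1 == tau k).
Proof.
move=> le_kt; have le_kt1 := leqW le_kt.
by rewrite /const_on /index_iota subSn // -addn1 iotaD all_cat subnKC //= andbT.
Qed.

Lemma const_on_last k t : k <= t -> const_on tau k t -> tau t = tau k.
Proof.
by move=> le_kt /allP/(_ t); rewrite mem_index_iota le_kt ltnSn => /(_ isT)/eqP.
Qed.

Hypothesis tau_wrap : tau (prev_cell n 0) != tau 0.

Lemma sum_run_starts t :
  \sum_(k < t.+1) (const_on tau k t && (tau (prev_cell n k) != tau k)) = 1.
Proof.
elim: t => [|t IHt]; first by rewrite big_ord_recr big_ord0 /= const_on_refl tau_wrap.
rewrite big_ord_recr /= const_on_refl /=.
rewrite (eq_bigr (fun k : 'I_t.+1 =>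
  (tau t.+1 == tau t) * (const_on tau k t && (tau (prev_cell n k) != tau k)))).
  by rewrite -big_distrr /= IHt eq_sym; case: (tau t == tau t.+1).
move=> [k /= lt_kt] _; rewrite const_onS //.
case C: (const_on tau k t) => /=; last by rewrite muln0.
by rewrite (const_on_last _ C) //; case: (_ == _); case: (_ != _).
Qed.

Lemma sum_runs_ending t : \sum_(k < t.+1) run n tau k t = (tau t != tau t.+1).
Proof.
rewrite -[RHS]muln1 -(sum_run_starts t) big_distrr /=.
apply: eq_bigr => [[k /= lt_kt]] _.
rewrite /run; case C: (const_on tau k t) => /=; last by rewrite muln0.
rewrite (const_on_last _ C) // [tau k == _]eq_sym.
by case: (_ != _); case: (_ != _).
Qed.

Lemma sum_runs_upto m : m < n ->
  \sum_(k < n) \sum_(t < n) ((k <= t <= m) && run n tau k t)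
  = \sum_(t < m.+1) (tau t != tau t.+1).
Proof.
move=> lt_mn; pose change t := nat_of_bool (tau t != tau t.+1).
rewrite exchange_big (big_ord_widen n change lt_mn) [RHS]big_mkcond /change /=.
apply: eq_bigr => t _; rewrite ltnS; case: leqP => _; last first.
  by rewrite big1 // => k _; rewrite andbF.
rewrite -sum_runs_ending.
rewrite (big_ord_widen n (fun k => nat_of_bool (run n tau k t)) (ltn_ord t)).
by rewrite [RHS]big_mkcond; apply: eq_bigr => k _; rewrite andbT ltnS; case: (k <= t).
Qed.

End Runs.

Lemma odd_sum_changes (tau : nat -> bool) m :
  odd (\sum_(t < m) (tau t != tau t.+1)) = (tau 0 != tau m).
Proof.
elim: m => [|m IHm]; first by rewrite big_ord0 eqxx.
by rewrite big_ord_recr /= oddD IHm; case: (tau 0); case: (tau m); case: (tau m.+1).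
Qed.

Section Rotation.

Variables (n x : nat) (s : nat -> bool).
Hypotheses (n_gt1 : 1 < n) (lt_xn : x < n).

Let n_gt0 : 0 < n := ltnW n_gt1.

Let tau u := s (cadd n x u).

Lemma sum_cadd (F : nat -> nat) : \sum_(b < n) F b = \sum_(t < n) F (cadd n x t).
Proof.
pose h (t : 'I_n) := Ordinal (cadd_lt n_gt0 x t).
rewrite (reindex_inj (h := h)) // => t u /(congr1 (fun c => csub n (val c) x)) /=.
by rewrite !caddK //; apply: val_inj.
Qed.

Lemma all_in_cint_cadd a b (P : pred nat) : a < n -> b < n ->
  all (fun c => in_cint n (cadd n x a) (cadd n x b) c ==> P c) (iota 0 n)
  = all (fun u => in_cint n a b u ==> P (cadd n x u)) (iota 0 n).
Proof.
move=> lt_an lt_bn; rewrite (all_iota_cadd n_gt0 _ lt_xn); apply: eq_in_all => u.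
by rewrite mem_iota add0n => /andP[_ lt_un]; rewrite in_cint_caddl.
Qed.

Lemma csub_cadd_prev k : k < n -> csub n (cadd n x k) 1 = cadd n x (prev_cell n k).
Proof.
move=> lt_kn; rewrite /csub /cadd (modn_small n_gt1) /prev_cell.
by case: k lt_kn => [|k] lt_kn; rewrite -?subn1; case_modn n; lia.
Qed.

Lemma cint_sub_cadd k t m : k < n -> t < n -> m.+1 < n ->
  cint_sub n (cadd n x k) (cadd n x t) x (cadd n x m) = (k <= t <= m).
Proof.
move=> lt_kn lt_tn lt_m1n; have lt_mn := ltnW lt_m1n.
rewrite /cint_sub all_in_cint_cadd //.
rewrite (eq_in_all (a2 := fun u => in_cint n k t u ==> (u <= m))); last first.
  move=> u; rewrite mem_iota add0n => /andP[_ lt_un].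
  rewrite -[X in in_cint _ X (cadd _ _ m)](cadd0 lt_xn) in_cint_caddl //.
  by rewrite (in_cint_le n_gt0 (leq0n m) lt_mn lt_un).
case: (leqP k t) => [le_kt | lt_tk] /=.
  apply/allP/idP => [in_sub | le_tm u].
    by apply: (implyP (in_sub t _)); rewrite ?mem_iota ?in_cint_last.
  rewrite mem_iota add0n => /andP[_ lt_un]; rewrite in_cint_le //.
  by apply/implyP => /andP[_ le_ut]; apply: leq_trans le_tm.
apply/allP => /(_ n.-1); rewrite mem_iota in_cint_wrap ?lt_tk //=; lia.
Qed.

Lemma all_in_cint_eq k t (beta : bool) : k <= t -> t < n ->
  all (fun u => in_cint n k t u ==> (tau u == beta)) (iota 0 n)
  = const_on tau k t && (tau k == beta).
Proof.
move=> le_kt lt_tn.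
have segE u : u \in iota 0 n -> in_cint n k t u = (k <= u <= t).
  by rewrite mem_iota add0n => /andP[_ lt_un]; rewrite in_cint_le.
apply/allP/andP => [seg | [/allP const /eqP <-] u iota_u].
  have seg_eq u : k <= u <= t -> tau u == beta.
    move=> k_u_t; have iota_u : u \in iota 0 n by rewrite mem_iota; lia.
    by apply: (implyP (seg u iota_u)); rewrite segE.
  split; last by apply: seg_eq; rewrite leqnn le_kt.
  apply/allP => u; rewrite mem_index_iota ltnS => k_u_t.
  by rewrite (eqP (seg_eq u k_u_t)) (eqP (seg_eq k _)) // leqnn le_kt.
by rewrite segE //; apply/implyP => k_u_t; apply: const; rewrite mem_index_iota ltnS.
Qed.

Lemma is_block_cadd k t : k <= t -> t < n ->
  is_block n s (cadd n x k) (cadd n x t) = run n tau k t.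
Proof.
move=> le_kt lt_tn; have lt_kn : k < n by apply: leq_ltn_trans lt_tn.
rewrite /is_block /is_block_of !cadd_lt //=.
rewrite (all_in_cint_cadd (fun c => s c == false)) //.
rewrite (all_in_cint_cadd (fun c => s c == true)) //.
rewrite !all_in_cint_eq // csub_cadd_prev // caddA addn1 /run -/(tau _) -/(tau _).
by case: (const_on _ _ _); case: (tau k); case: (tau _); case: (tau _).
Qed.

Lemma block_in_interval_cadd k t m : k < n -> t < n -> m.+1 < n ->
  is_block n s (cadd n x k) (cadd n x t)
    && cint_sub n (cadd n x k) (cadd n x t) x (cadd n x m)
  = (k <= t <= m) && run n tau k t.
Proof.
move=> lt_kn lt_tn lt_m1n; rewrite cint_sub_cadd //.
case: (leqP k t) => [le_kt | _]; last by rewrite andbF.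
by rewrite is_block_cadd // andbC.
Qed.

Lemma block_interval_card_cadd m : m.+1 < n -> tau n.-1 != tau 0 ->
  block_interval_card n s x (cadd n x m) = \sum_(t < m.+1) (tau t != tau t.+1).
Proof.
move=> lt_m1n tau_wrap; rewrite -(sum_runs_upto tau_wrap (ltnW lt_m1n)).
pose F a b := is_block n s a b && cint_sub n a b x (cadd n x m).
rewrite /block_interval_card (sum_cadd (fun a => \sum_(b < n) F a b)).
apply: eq_bigr => k _; rewrite (sum_cadd (F (cadd n x k))).
by apply: eq_bigr => t _; rewrite /F block_in_interval_cadd.
Qed.

End Rotation.

Lemma odd_block_interval_card n (s : nat -> bool) x y' :
  0 < n -> x < n -> y' < n ->
  s (csub n x 1) != s x -> s (cadd n y' 1) != s y' -> s x = s y' ->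
  odd (block_interval_card n s x y').
Proof.
move=> n_gt0 lt_xn lt_yn s_pred s_succ s_xy.
have n_gt1 : 1 < n.
  case: ltnP => // le_n1.
  have n1 : n = 1 by lia.
  have x0 : x = 0 by lia.
  by move: s_pred; rewrite n1 x0 /csub modn1 eqxx.
pose m := csub n y' x; have y'E : y' = cadd n x m by rewrite cadd_csub.
have lt_m1n : m.+1 < n.
  have lt_mn : m < n by apply: csub_lt.
  rewrite ltn_neqAle lt_mn andbT; apply/eqP => m1E; move: s_succ.
  have -> : cadd n y' 1 = x by rewrite y'E caddA addn1 m1E /cadd modnDr modn_small.
  by move/eqP/(_ s_xy).
have x0E : cadd n x 0 = x by apply: cadd0.
rewrite y'E block_interval_card_cadd //.
  rewrite (odd_sum_changes (fun u => s (cadd n x u))) x0E -addn1 -caddA -y'E.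
  by rewrite s_xy eq_sym.
by rewrite -(csub_cadd_prev n_gt1 lt_xn n_gt0) !x0E.
Qed.

Theorem claim8 (r n : nat) (sigma sigma' : nat -> bool) :
  1 <= r -> 0 < n ->
  (forall c, c < n -> maj n r sigma c = sigma' c) ->
  forall i j, is_block n sigma' i j ->
  forall x y x' y',
    is_left_image n r sigma i j x y ->
    is_right_image n r sigma i j x' y' ->
    odd (block_interval_card n sigma x y').
Proof.
move=> _ n_gt0 maj_sigma i j blk_ij x y x' y'.
move=> /andP[blk_xy in_xy] /andP[blk_xy' in_xy'].
have sigma'_flip q : q < n -> sigma' q != sigma' (cadd n q 1) ->
    sigma (csub n q r) = sigma' q /\ sigma (cadd n (cadd n q r) 1) = sigma' (cadd n q 1).
  by move=> lt_qn; rewrite -!maj_sigma ?cadd_lt //; apply: maj_flip.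
have [lt_in lt_jn] := block_lt blk_ij.
have [_ s'_j s'_pred s'_succ] := block_boundary blk_ij (in_cint_first j lt_in).
have j_flip : sigma' j != sigma' (cadd n j 1) by rewrite s'_succ s'_j; case: (sigma' i).
have [s_left _] := sigma'_flip j lt_jn j_flip.
have i_flip : sigma' (csub n i 1) != sigma' (cadd n (csub n i 1) 1).
  by rewrite csubK // s'_pred; case: (sigma' i).
have [_ s_right] := sigma'_flip _ (csub_lt n_gt0 i 1) i_flip.
rewrite caddAC !csubK // in s_right.
have [[lt_xn _] [_ lt_yn]] := (block_lt blk_xy, block_lt blk_xy').
have [s_x _ s_xpred _] := block_boundary blk_xy in_xy.
have [_ s_y _ s_ysucc] := block_boundary blk_xy' in_xy'.
apply: odd_block_interval_card => //.
- by rewrite s_xpred s_x; case: (sigma _).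
- by rewrite s_ysucc s_y; case: (sigma _).
- by rewrite s_x s_y s_left s_right s'_j.
Qed.
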